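(* Every solution of $x_{n+1}=\sum_{j=0}^{k-1}a_jx_{n-j}$ converges to $0$ (equivalently, all eigenvalues of $J_0$ lie in the open unit disk) if and only if there exists $m\in\mathbb{N}=\{0,1,2,\dots\}$ with $\|p_m\|_{\ell_1}<2$, i.e. $\sum_{j=0}^{k-1}|b_{m,j}|<1$.
   Context: Let $k\ge 2$, $a_0,\dots,a_{k-1}\in\mathbb{R}$, $a_0\ne0$. $J_0$ is the $k\times k$ companion matrix with first row $(a_0,\dots,a_{k-1})$, ones at positions $(i+1,i)$, zeros elsewhere. Define $b_{0,j}=a_j$ ($0\le j\le k-1$) and for $m\ge0$: $b_{m+1,j}=a_jb_{m,0}+b_{m,j+1}$ ($0\le j\le k-2$), $b_{m+1,k-1}=a_{k-1}b_{m,0}$ (equivalently, $[b_{m,0},\dots,b_{m,k-1}]^t=(J_0^t)^m[a_0,\dots,a_{k-1}]^t$). Let $p_m(x)=x^{k+m}-\sum_{j=0}^{k-1}b_{m,j}x^{k-j-1}$. For a polynomial $p$, $\|p\|_{\ell_1}$ is the sum of the absolute values of its coefficients. *)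

From HB Require Import structures.
From mathcomp Require Import all_boot all_order all_algebra.
From mathcomp Require Import all_classical all_reals all_analysis.
Set Implicit Arguments. Unset Strict Implicit. Unset Printing Implicit Defensive.
Import Order.TTheory GRing.Theory Num.Theory.
Local Open Scope ring_scope.

Section Defs.
Variable R : realType.

(* b_{m,j} for 0 <= j <= k-1 (and 0 for j >= k), with the coefficients a_j
   given by a : nat -> R (only a 0, ..., a (k-1) are used).
   b_{0,j} = a_j ;  b_{m+1,j} = a_j b_{m,0} + b_{m,j+1}  (j <= k-2),
   b_{m+1,k-1} = a_{k-1} b_{m,0}  (the convention b_{m,k} = 0). *)
Fixpoint bcoef (k : nat) (a : nat -> R) (m j : nat) : R :=
  match m with
  | 0 => if (j < k)%N then a j else 0
  | m'.+1 => if (j < k)%N then a j * bcoef k a m' 0 + bcoef k a m' j.+1 else 0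
  end.

Definition pm (k : nat) (a : nat -> R) (m : nat) : {poly R} :=
  'X^(k + m) - \sum_(j < k) (bcoef k a m j)%:P * 'X^(k - j - 1).

Definition l1norm (p : {poly R}) : R := \sum_(i < size p) `|p`_i|.

Definition is_solution (k : nat) (a : nat -> R) (x : nat -> R) : Prop :=
  forall n : nat, (k.-1 <= n)%N -> x n.+1 = \sum_(j < k) a j * x (n - j)%N.
End Defs.

From HB Require Import structures.
From mathcomp Require Import all_boot all_order all_algebra.
From mathcomp Require Import all_classical all_reals all_analysis.
Import Order.TTheory GRing.Theory Num.Theory.
Import numFieldNormedType.Exports.
From mathcomp Require Import zify lra.
Set Implicit Arguments.
Unset Strict Implicit.
Unset Printing Implicit Defensive.
Local Open Scope classical_set_scope.
Local Open Scope ring_scope.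

(* Unrolling the recurrence m+1 times expresses x_{n+m+1} as the combination
   sum_j b_{m,j} x_{n-j} of the k preceding values.  If sum_j |b_{m,j}| = c < 1,
   a term of the q-th block of k+m consecutive indices is bounded by c^q times
   the l1 norm of the first block, so x decays geometrically.  Conversely,
   b_{m,j} is the term x_{k+m} of the solution whose initial data is a unit
   vector; if all solutions tend to 0, then for large m every |b_{m,j}| is below
   1/(k+1).  Finally ||p_m||_1 = 1 + sum_j |b_{m,j}|. *)

Section Bcoef.
Variables (R : realType) (k : nat) (a : nat -> R).

Lemma bcoef_out m j : (k <= j)%N -> bcoef k a m j = 0.
Proof. by move=> kj; case: m => [|m] /=; rewrite ltnNge kj. Qed.

Lemma sum_bcoef_monomials m :
  \sum_(j < k) (bcoef k a m j)%:P * 'X^(k - j - 1) =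
  \poly_(i < k) bcoef k a m (k - 1 - i)%N :> {poly R}.
Proof.
apply/polyP => i; rewrite coef_sum coef_poly.
under eq_bigr do rewrite coefCM coefXn.
case: ifP => ik; last first.
  by rewrite big1 // => j _; rewrite (_ : (i == _) = false) ?mulr0 //; apply/eqP; move: (ltn_ord j) ik; lia.
have jk : (k - 1 - i < k)%N by lia.
rewrite (bigD1 (Ordinal jk)) //= big1 ?addr0; first by rewrite (_ : i == _) ?mulr1 //; apply/eqP; lia.
move=> j /eqP neq_j; rewrite (_ : (i == _) = false) ?mulr0 //; apply/eqP => eq_i; apply: neq_j.
by apply/val_inj => /=; move: (ltn_ord j) ik eq_i; lia.
Qed.

Lemma l1norm_pm m : (0 < k)%N -> l1norm (pm k a m) = 1 + \sum_(j < k) `|bcoef k a m j|.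
Proof.
move=> k_gt0; rewrite /l1norm /pm sum_bcoef_monomials.
set q := \poly_(i < k) _.
have size_q : (size q <= k)%N by apply: size_poly.
have -> : size ('X^(k + m) - q) = (k + m).+1.
  rewrite size_polyDl size_polyXn // size_polyN; apply: leq_trans size_q _; exact: leq_addr.
rewrite big_ord_recr /= coefD coefN coefXn eqxx coef_poly ifF; last by lia.
rewrite subr0 normr1 addrC; congr (_ + _).
transitivity (\sum_(i < k + m) `|if (i < k)%N then bcoef k a m (k - 1 - i) else 0|).
  apply: eq_bigr => i _; rewrite coefD coefN coefXn coef_poly.
  by rewrite (_ : (i == k + m :> nat) = false) ?sub0r ?normrN //; apply/negbTE; rewrite neq_ltn ltn_ord.
rewrite (bigID (fun i : 'I_(k + m) => (i < k)%N)) /= [X in _ + X]big1 ?addr0; last first.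
  by move=> i /negbTE ->; rewrite normr0.
rewrite -(big_ord_widen _ (fun i => `|if (i < k)%N then bcoef k a m (k - 1 - i) else 0|)) ?leq_addr //.
rewrite (reindex_inj rev_ord_inj) /=; apply: eq_bigr => i _; have := ltn_ord i.
by move=> ik; rewrite ifT; [congr `|bcoef _ _ _ _| | ]; lia.
Qed.

End Bcoef.

Section Solutions.
Variables (R : realType) (k : nat) (a : nat -> R).
Hypothesis k_gt0 : (0 < k)%N.

Lemma solution_bcoef_expansion {x} : is_solution k a x ->
  forall m n, (k.-1 <= n)%N -> x (n + m).+1 = \sum_(j < k) bcoef k a m j * x (n - j)%N.
Proof.
move: k_gt0; case: k => [//|k'] _ solx.
elim=> [|m IHm] n kn.
  by rewrite addn0 solx //; apply: eq_bigr => j _; rewrite /= ltn_ord.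
rewrite addnS -addSn IHm ?leqW // big_ord_recl /= subn0 solx // big_distrr /=.
under [RHS]eq_bigr => j _ do rewrite /= ltn_ord mulrDl.
rewrite big_split /= [X in _ = _ + X]big_ord_recr /= (@bcoef_out _ k'.+1 a m k'.+1) // mul0r addr0.
by congr (_ + _); apply: eq_bigr => j _; rewrite mulrA (mulrC (bcoef _ _ _ _)).
Qed.

(* The window [:: x_n; x_{n-1}; ...; x_0] of the solution with initial values
   [init 0, ..., init (k-1)]. *)
Fixpoint solution_window (init : nat -> R) (n : nat) : seq R :=
  match n with
  | 0 => [:: init 0%N]
  | n'.+1 => (if (n'.+1 < k)%N then init n'.+1
              else \sum_(j < k) a j * nth 0 (solution_window init n') j)
             :: solution_window init n'
  end.

Definition solution_from init n := head 0 (solution_window init n).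

Lemma nth_solution_window init n j : (j <= n)%N ->
  nth 0 (solution_window init n) j = solution_from init (n - j).
Proof. by elim: n j => [|n IHn] [|j] //= jn; rewrite IHn. Qed.

Lemma solution_from_init init n : (n < k)%N -> solution_from init n = init n.
Proof. by case: n => [|n] // nk; rewrite /solution_from /= nk. Qed.

Lemma solution_fromP init : is_solution k a (solution_from init).
Proof.
move=> n kn; rewrite /solution_from /= ifF; last by lia.
by apply: eq_bigr => j _; rewrite nth_solution_window //; have := ltn_ord j; lia.
Qed.

Definition unit_solution (j0 : 'I_k) :=
  solution_from (fun i => if i == (k.-1 - j0)%N then 1 else 0).

Lemma bcoef_unit_solution (j0 : 'I_k) m :
  bcoef k a m j0 = unit_solution j0 (k.-1 + m).+1.
Proof.
rewrite /unit_solution (solution_bcoef_expansion (solution_fromP _)) // (bigD1 j0) //= big1 ?addr0.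
  by rewrite solution_from_init ?eqxx ?mulr1 //; have := ltn_ord j0; lia.
move=> j neq_j; rewrite solution_from_init; last by have := ltn_ord j; lia.
rewrite ifF ?mulr0 //; apply: contraNF neq_j => /eqP eq_j.
by apply/eqP/val_inj => /=; move: eq_j; have := ltn_ord j; have := ltn_ord j0; lia.
Qed.

Lemma bcoef_contraction_of_cvg0 :
  (forall x, is_solution k a x -> x n @[n --> \oo] --> (0 : R)) ->
  exists m, \sum_(j < k) `|bcoef k a m j| < 1.
Proof.
move=> cvg0.
pose e : R := (k%:R + 1)^-1.
have e_gt0 : 0 < e by rewrite invr_gt0 ltr_wpDl.
have : \forall m \near \oo, forall j0 : 'I_k, `|bcoef k a m j0| < e.
  apply: filter_forall => j0.
  have sol_j0 : is_solution k a (unit_solution j0) by exact: solution_fromP.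
  have /cvgr0Pnorm_lt /(_ e e_gt0) [N _ smallN] := cvg0 _ sol_j0.
  by exists N => // m /= Nm; rewrite bcoef_unit_solution; apply: smallN => /=; lia.
case=> N _ smallN; exists N.
apply: (@le_lt_trans _ _ (\sum_(j < k) e)).
  by apply: ler_sum => j _; exact: ltW (smallN N (leqnn N) j).
by rewrite sumr_const card_ord -mulr_natl ltr_pdivrMr ?ltr_wpDl //; lra.
Qed.

Lemma solution_geometric_bound x m : is_solution k a x ->
  \sum_(j < k) `|bcoef k a m j| < 1 -> forall t,
  `|x t| <= (\sum_(i < k + m) `|x i|) * (\sum_(j < k) `|bcoef k a m j|) ^+ (t %/ (k + m)).
Proof.
move=> solx; set c := \sum_(j < k) _ => c_lt1; set M := \sum_(i < _) _; set L := (k + m)%N.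
have c_ge0 : 0 <= c by apply: sumr_ge0 => j _; exact: normr_ge0.
have M_ge0 : 0 <= M by apply: sumr_ge0 => j _; exact: normr_ge0.
have L_gt0 : (0 < L)%N by rewrite /L; lia.
elim/ltn_ind => t IHt; case: (ltnP t L) => tL.
  rewrite divn_small // expr0 mulr1 /M (bigD1 (Ordinal tL)) //= lerDl.
  by apply: sumr_ge0 => j _; exact: normr_ge0.
set q := (t %/ L)%N; have q_gt0 : (0 < q)%N by rewrite /q divn_gt0.
have -> : t = ((t - m.+1) + m).+1 by rewrite /L in tL; lia.
rewrite (solution_bcoef_expansion solx); last by rewrite /L in tL; lia.
apply: (le_trans (ler_norm_sum _ _ _)).
apply: (@le_trans _ _ (\sum_(j < k) `|bcoef k a m j| * (M * c ^+ q.-1))).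
  apply: ler_sum => j _; rewrite normrM; apply: ler_wpM2l => //.
  apply: (le_trans (IHt _ _)); first by have := ltn_ord j; lia.
  apply: ler_wpM2l => //; apply: ler_wiXn2l => //; first exact: ltW.
  rewrite leq_divRL // -subn1 mulnBl mul1n.
  by have := leq_trunc_div t L; rewrite -/q /L; have := ltn_ord j; lia.
by rewrite -big_distrl /= -/c mulrCA -exprS prednK.
Qed.

End Solutions.

Lemma cvg0_of_block_geometric_bound (R : realType) (x : nat -> R) (M c : R) (L : nat) :
  (0 < L)%N -> 0 <= M -> 0 <= c < 1 ->
  (forall t, `|x t| <= M * c ^+ (t %/ L)) -> x n @[n --> \oo] --> (0 : R).
Proof.
move=> L_gt0 M_ge0 /andP[c_ge0 c_lt1] bound_x; apply/cvgr0Pnorm_lt => e e_gt0.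
pose e' := e / (M + 1).
have e'_gt0 : 0 < e' by rewrite divr_gt0 // ltr_wpDl.
have e'_scaled : e' * M + e' = e by rewrite -[X in _ + X]mulr1 -mulrDr divfK // lt0r_neq0 ?ltr_wpDl.
have := @cvg_expr R c; rewrite ger0_norm // => /(_ c_lt1).
move=> /cvgr0Pnorm_lt /(_ e' e'_gt0) [N _ smallN].
exists (N * L)%N => // t /= NLt; apply: (le_lt_trans (bound_x t)).
have cq_le : c ^+ (t %/ L) <= c ^+ N
  by apply: ler_wiXn2l => //; [exact: ltW | rewrite leq_divRL].
have cN_lt : c ^+ N < e' by have := smallN N (leqnn N); rewrite /= ger0_norm ?exprn_ge0.
have : M * c ^+ (t %/ L) <= M * e' by apply: ler_wpM2l => //; apply: (le_trans cq_le); exact: ltW.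
nra.
Qed.

Theorem mainTheorem7 (R : realType) (k : nat) (a : nat -> R) :
  (2 <= k)%N -> a 0%N != 0 ->
  ((forall x : nat -> R, is_solution k a x -> x n @[n --> \oo] --> (0 : R)) <->
   (exists m : nat, l1norm (pm k a m) < 2)).
Proof.
move=> k_ge2 _; have k_gt0 : (0 < k)%N by lia.
split=> [/(bcoef_contraction_of_cvg0 k_gt0) [m contr] | [m]].
  by exists m; rewrite l1norm_pm //; lra.
rewrite l1norm_pm // => norm_lt2 x solx.
have contr : \sum_(j < k) `|bcoef k a m j| < 1 by lra.
move: (solution_geometric_bound k_gt0 solx contr); apply: cvg0_of_block_geometric_bound.
- by lia.
- by apply: sumr_ge0 => i _; exact: normr_ge0.
- by rewrite contr andbT; apply: sumr_ge0 => j _; exact: normr_ge0.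
Qed.
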